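(* Let $t$ be even, $c\ge 0$ an integer, and $S\subseteq[n]$ with $|S|\geq n/k^c$. Let $\mathcal B$ be the following system of polynomial constraints in scalar variables $z_r^{i,j}$ ($r\in[n]$, $i,j\in[k]$) and vector variables $v_r\in\mathbb R^d$ ($r\in[n]$): (i) $z_r^{i,j}=(z_r^{i,j})^2$ for all $r,i,j$; (ii) $\sum_{i=1}^k\sum_{j=1}^k z_r^{i,j}=1$ for all $r$; (iii) $z_r^{i,j}z_s^{i,j}(v_r-v_s)=0$ for all $i,j\in[k]$, $r,s\in[n]$; (iv) for all $u\in\mathbb R^d$: $\frac1n\sum_{r=1}^n\langle v_r,u\rangle^t\leq 2\cdot(4t)^{t/2}\|u\|_2^t$. Then for all $i,j\in[k]$, $$\mathcal B\vdash_{O(t)}\ \frac{1}{|S|}\sum_{r\in S}z_r^{i,j}\|v_r\|_2^t\leq 2\cdot k^c\cdot(4t)^{t/2}.$$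
   Context: $\mathcal B\vdash_s p\geq 0$ means there is a degree-$s$ sum-of-squares proof: $p$ is a sum of terms $b\cdot\prod q$ with $b$ a sum of squares of polynomials and $q$ ranging over (products of) the constraints, each term of degree at most $s$ (an equality constraint $q=0$ may be used with either sign and multiplied by arbitrary polynomials). The universally quantified constraint (iv) is understood as being certified by a sum-of-squares proof in the variables $u$, so that it may be used in sum-of-squares proofs with $u$ instantiated as any vector whose entries are polynomials of degree at most $2$ in the variables $z_r^{i,j},v_r$. *)

From HB Require Import structures.
From mathcomp Require Import all_boot all_order all_algebra.
From mathcomp Require Import reals.
From mathcomp Require Import mpoly.
Set Implicit Arguments. Unset Strict Implicit. Unset Printing Implicit Defensive.
Import Order.TTheory GRing.Theory Num.Theory.
Local Open Scope ring_scope.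

(* Variables: z_r^{i,j} (r<n, i,j<k) and coordinates v_{r,l} (r<n, l<d). *)
Definition var_t (n k d : nat) : finType :=
  (('I_n * 'I_k * 'I_k) + ('I_n * 'I_d))%type.
Definition Nv (n k d : nat) : nat := #|{: var_t n k d}|.

Section Sys.
Variable R : realType.
Variables n k d : nat.
Notation P := {mpoly R[Nv n k d]}.

Definition zvar (r : 'I_n) (i j : 'I_k) : P := 'X_(enum_rank (inl (r, i, j) : var_t n k d)).
Definition vvar (r : 'I_n) (l : 'I_d) : P := 'X_(enum_rank (inr (r, l) : var_t n k d)).

Definition pdeg (p : P) : nat := (msize p).-1.

(* Equality constraints (i),(ii),(iii), as polynomials q with q = 0. *)
Definition eq_constr (q : P) : Prop :=
  (exists r i j, q = zvar r i j ^+ 2 - zvar r i j) \/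
  (exists r, q = \sum_(i < k) \sum_(j < k) zvar r i j - 1) \/
  (exists i j r s (l : 'I_d), q = zvar r i j * zvar s i j * (vvar r l - vvar s l)).

(* Inequality constraints (iv) q >= 0, with u instantiated as any vector of
   polynomials of degree at most 2 in the variables z, v. *)
Definition ineq_constr (t : nat) (q : P) : Prop :=
  exists u : 'I_d -> P, (forall l, pdeg (u l) <= 2)%N /\
    q = (2 * (4 * t%:R) ^+ (t %/ 2) : R)%:MP * (\sum_(l < d) u l ^+ 2) ^+ (t %/ 2)
        - (n%:R^-1 : R)%:MP * \sum_(r < n) (\sum_(l < d) vvar r l * u l) ^+ t.

Definition sos_proves (t s : nat) (p : P) : Prop :=
  exists (terms : seq (P * seq P)) (eqs : seq (P * P)),
    [/\ forall a, a \in terms ->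
          (forall q, q \in a.2 -> ineq_constr t q) /\
          (2 * pdeg a.1 + \sum_(q <- a.2) pdeg q <= s)%N,
        forall b, b \in eqs -> eq_constr b.2 /\ (pdeg b.1 + pdeg b.2 <= s)%N &
        p = \sum_(a <- terms) a.1 ^+ 2 * \prod_(q <- a.2) q
            + \sum_(b <- eqs) b.1 * b.2].

End Sys.

(* Write z_r for z_r^{i,j}, X_r := ||v_r||^t, K := 2 (4t)^{t/2} and
   Y := sum_{r in S} z_r X_r.  Applying (iv) to u = z_r v_r and multiplying by
   z_r^2 gives, modulo the Boolean constraints (i), K z_r X_r >= (1/n) sum_s
   z_r <v_s, v_r>^t.  Each summand dominates z_r z_s X_r^2: the part
   z_r (1 - z_s) <v_s, v_r>^t is a square modulo (i), and on z_r z_s the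
   constraint (iii) identifies v_s with v_r.  Summing over r in S, dropping
   the terms with s outside S and using (iii) once more yields K Y >= Y^2 / n,
   and K (nK - Y) = (nK - Y)^2 / n + (K Y - Y^2 / n) turns this into
   Y <= n K <= |S| k^c K. *)

From HB Require Import structures.
From mathcomp Require Import all_boot all_order all_algebra.
From mathcomp Require Import reals.
From mathcomp Require Import mpoly.
From mathcomp Require Import zify ring.
Set Implicit Arguments. Unset Strict Implicit. Unset Printing Implicit Defensive.
Import Order.TTheory GRing.Theory Num.Theory.
Local Open Scope ring_scope.

Section PolynomialDegree.
Variable R : realType.
Variables n k d : nat.
Implicit Types p q : {mpoly R[Nv n k d]}.

Lemma pdegC (c : R) : pdeg (c%:MP : {mpoly R[Nv n k d]}) = 0%N.
Proof. by rewrite /pdeg msizeC; case: (c != 0). Qed.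

Lemma pdeg1 : pdeg (1 : {mpoly R[Nv n k d]}) = 0%N.
Proof. by rewrite -mpolyC1 pdegC. Qed.

Lemma pdegXvar (x : 'I_(Nv n k d)) : pdeg ('X_x : {mpoly R[Nv n k d]}) = 1%N.
Proof. by rewrite /pdeg msizeX mdeg1. Qed.

Lemma pdegN p : pdeg (- p) = pdeg p.
Proof. by rewrite /pdeg msizeN. Qed.

Lemma pdegD_le p q a : (pdeg p <= a -> pdeg q <= a -> pdeg (p + q) <= a)%N.
Proof. by rewrite /pdeg => hp hq; have := msizeD_le p q; lia. Qed.

Lemma pdegB_le p q a : (pdeg p <= a -> pdeg q <= a -> pdeg (p - q) <= a)%N.
Proof. by move=> hp hq; rewrite pdegD_le // pdegN. Qed.

Lemma pdegM_le p q a b : (pdeg p <= a -> pdeg q <= b -> pdeg (p * q) <= a + b)%N.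
Proof.
have [->|p0] := eqVneq p 0; first by rewrite mul0r /pdeg msize0.
have [->|q0] := eqVneq q 0; first by rewrite mulr0 /pdeg msize0.
rewrite /pdeg msizeM //.
case: (msize p) (msize_poly_eq0 p) => [/eqP|x _]; first by rewrite (negbTE p0).
case: (msize q) (msize_poly_eq0 q) => [/eqP|y _]; first by rewrite (negbTE q0).
by rewrite addSn addnS; apply: leq_add.
Qed.

Lemma pdegX_le p a e : (pdeg p <= a -> pdeg (p ^+ e) <= e * a)%N.
Proof.
move=> hp; elim: e => [|e IH]; first by rewrite expr0 pdeg1.
by rewrite exprS mulSn pdegM_le.
Qed.

Lemma pdeg_sum_le (I : Type) (r : seq I) (Q : pred I) (F : I -> {mpoly R[Nv n k d]}) a :
  (forall i, Q i -> pdeg (F i) <= a)%N -> (pdeg (\sum_(i <- r | Q i) F i) <= a)%N.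
Proof.
move=> hF; elim/big_rec: _ => [|i p Qi hp]; last exact: pdegD_le (hF i Qi) hp.
by rewrite -mpolyC0 pdegC.
Qed.

Lemma pdeg_zvar (r : 'I_n) (i j : 'I_k) : pdeg (zvar R d r i j) = 1%N.
Proof. exact: pdegXvar. Qed.

Lemma pdeg_vvar (r : 'I_n) (l : 'I_d) : pdeg (vvar R k r l) = 1%N.
Proof. exact: pdegXvar. Qed.

End PolynomialDegree.

Section Certificates.
Variable R : realType.
Variables n k d t : nat.
Local Notation P := {mpoly R[Nv n k d]}.
Implicit Types p q b c f h : P.

Definition in_ideal (s : nat) p : Prop :=
  exists eqs : seq (P * P),
    (forall x, x \in eqs -> eq_constr x.2 /\ (pdeg x.1 + pdeg x.2 <= s)%N) /\
    p = \sum_(x <- eqs) x.1 * x.2.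

Lemma in_ideal0 s : in_ideal s 0.
Proof. by exists [::]; rewrite big_nil. Qed.

Lemma in_ideal_constr s f (e : P) : eq_constr e -> (pdeg f + pdeg e <= s)%N -> in_ideal s (f * e).
Proof.
by move=> he hs; exists [:: (f, e)]; rewrite big_seq1; split=> // b; rewrite inE => /eqP ->.
Qed.

Lemma in_idealW s s' p : (s <= s')%N -> in_ideal s p -> in_ideal s' p.
Proof.
move=> ss' [eqs [heqs ->]]; exists eqs; split=> // b /heqs [? hb].
by split=> //; apply: leq_trans ss'.
Qed.

Lemma in_idealD s p q : in_ideal s p -> in_ideal s q -> in_ideal s (p + q).
Proof.
move=> [e1 [h1 ->]] [e2 [h2 ->]]; exists (e1 ++ e2); rewrite big_cat; split=> // b.
by rewrite mem_cat => /orP[/h1|/h2].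
Qed.

Lemma in_idealMl s a f p : (pdeg f <= a)%N -> in_ideal s p -> in_ideal (a + s) (f * p).
Proof.
move=> hf [eqs [heqs ->]]; exists [seq (f * x.1, x.2) | x <- eqs]; split.
  move=> _ /mapP[b /heqs[hb hbs] ->] /=; split=> //.
  by apply: leq_trans (leq_add (pdegM_le hf (leqnn _)) (leqnn _)) _; rewrite -addnA leq_add2l.
by rewrite big_map mulr_sumr; apply: eq_bigr => x _; rewrite mulrA.
Qed.

Lemma in_idealN s p : in_ideal s p -> in_ideal s (- p).
Proof.
by move=> hp; rewrite -mulN1r -mpolyC1 -mpolyCN -[s]add0n; apply: in_idealMl; rewrite ?pdegC.
Qed.

Lemma in_idealB s p q : in_ideal s p -> in_ideal s q -> in_ideal s (p - q).
Proof. by move=> hp /in_idealN; apply: in_idealD. Qed.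

Lemma in_ideal_sum s (I : Type) (r : seq I) (Q : pred I) (F : I -> P) :
  (forall i, Q i -> in_ideal s (F i)) -> in_ideal s (\sum_(i <- r | Q i) F i).
Proof.
move=> hF; elim/big_rec: _ => [|i p Qi hp]; first exact: in_ideal0.
exact: in_idealD (hF i Qi) hp.
Qed.

Lemma sos_proves_ideal s p : in_ideal s p -> sos_proves t s p.
Proof. by move=> [eqs [heqs ->]]; exists [::], eqs; rewrite big_nil add0r. Qed.

Lemma sos_provesD s p q : sos_proves t s p -> sos_proves t s q -> sos_proves t s (p + q).
Proof.
move=> [sq1 [eqs1 [hsq1 heqs1 ->]]] [sq2 [eqs2 [hsq2 heqs2 ->]]].
exists (sq1 ++ sq2), (eqs1 ++ eqs2); split.
- by move=> a; rewrite mem_cat => /orP[/hsq1|/hsq2].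
- by move=> b; rewrite mem_cat => /orP[/heqs1|/heqs2].
- by rewrite !big_cat /=; ring.
Qed.

Lemma sos_proves_sum s (I : Type) (r : seq I) (Q : pred I) (F : I -> P) :
  (forall i, Q i -> sos_proves t s (F i)) -> sos_proves t s (\sum_(i <- r | Q i) F i).
Proof.
move=> hF; elim/big_rec: _ => [|i p Qi hp]; last exact: sos_provesD (hF i Qi) hp.
exact/sos_proves_ideal/in_ideal0.
Qed.

Lemma sos_proves_modideal s p q : sos_proves t s p -> in_ideal s (q - p) -> sos_proves t s q.
Proof.
by move=> hp /sos_proves_ideal hqp; rewrite -[q](subrK p) addrC; apply: sos_provesD.
Qed.

Lemma sos_provesZ s (c : R) p : 0 <= c -> sos_proves t s p -> sos_proves t s (c%:MP * p).
Proof.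
move=> c_ge0 [sq [eqs [hsq heqs ->]]].
exists [seq ((Num.sqrt c)%:MP * a.1, a.2) | a <- sq], [seq (c%:MP * x.1, x.2) | x <- eqs].
split.
- move=> _ /mapP[a /hsq[ha has] ->] /=; split=> //.
  by apply: leq_trans has; rewrite leq_add2r leq_mul2l -[pdeg a.1]add0n pdegM_le ?pdegC.
- move=> _ /mapP[b /heqs[hb hbs] ->] /=; split=> //.
  by apply: leq_trans hbs; rewrite leq_add2r -[pdeg b.1]add0n pdegM_le ?pdegC.
- rewrite !big_map mulrDr !mulr_sumr; congr (_ + _); apply: eq_bigr => a _ /=.
    by rewrite exprMn -rmorphXn /= sqr_sqrtr // mulrA.
  by rewrite mulrA.
Qed.

Lemma sos_proves_sqr s a h : (pdeg h <= a)%N -> (2 * a <= s)%N -> sos_proves t s (h ^+ 2).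
Proof.
move=> ha hs; exists [:: (h, [::])], [::]; split.
- move=> x; rewrite inE => /eqP -> /=; rewrite big_nil addn0; split=> //.
  by apply: leq_trans hs; rewrite leq_mul2l ha orbT.
- by [].
- by rewrite big_nil addr0 big_seq1 /= big_nil mulr1.
Qed.

Lemma sos_proves_const s (c : R) : 0 <= c -> sos_proves t s (c%:MP : P).
Proof.
move=> c_ge0; rewrite -[c%:MP]mulr1 -(expr1n _ 2).
by apply/sos_provesZ/(sos_proves_sqr (a := 0)); rewrite ?pdeg1.
Qed.

Lemma sos_proves_sqr_mul_ineq s a h q :
  ineq_constr t q -> (pdeg h <= a)%N -> (2 * a + pdeg q <= s)%N -> sos_proves t s (h ^+ 2 * q).
Proof.
move=> hq ha hs; exists [:: (h, [:: q])], [::]; split.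
- move=> x; rewrite inE => /eqP -> /=; rewrite big_seq1; split.
    by move=> y; rewrite inE => /eqP ->.
  by apply: leq_trans hs; rewrite leq_add2r leq_mul2l ha orbT.
- by [].
- by rewrite big_nil addr0 !big_seq1.
Qed.

Lemma sos_proves_idem_mul_sqr s sb a e b h :
  in_ideal sb (b ^+ 2 - b) -> (pdeg b <= a)%N -> (pdeg h <= e)%N ->
  (2 * e + sb <= s)%N -> (2 * (a + e) <= s)%N -> sos_proves t s (b * h ^+ 2).
Proof.
move=> hb ba he hsb hs.
apply: (sos_proves_modideal (p := (b * h) ^+ 2)).
  by apply: (sos_proves_sqr (a := (a + e)%N)) => //; apply: pdegM_le.
have -> : b * h ^+ 2 - (b * h) ^+ 2 = - (h ^+ 2 * (b ^+ 2 - b)) by ring.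
by apply/in_idealN/(in_idealW hsb)/in_idealMl => //; apply: pdegX_le.
Qed.

Lemma in_ideal_idemM s s1 s2 a1 a2 b c :
  in_ideal s1 (b ^+ 2 - b) -> in_ideal s2 (c ^+ 2 - c) ->
  (pdeg b <= a1)%N -> (pdeg c <= a2)%N -> (2 * a2 + s1 <= s)%N -> (a1 + s2 <= s)%N ->
  in_ideal s ((b * c) ^+ 2 - b * c).
Proof.
move=> hb hc ba ca hs1 hs2.
have -> : (b * c) ^+ 2 - b * c = c ^+ 2 * (b ^+ 2 - b) + b * (c ^+ 2 - c) by ring.
apply: in_idealD; last exact/(in_idealW hs2)/in_idealMl.
by apply/(in_idealW hs1)/in_idealMl => //; apply: pdegX_le.
Qed.

Lemma in_ideal_idem1B s b : in_ideal s (b ^+ 2 - b) -> in_ideal s ((1 - b) ^+ 2 - (1 - b)).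
Proof. by have -> : (1 - b) ^+ 2 - (1 - b) = b ^+ 2 - b by ring. Qed.

Lemma in_ideal_idemX s a e b :
  in_ideal s (b ^+ 2 - b) -> (pdeg b <= a)%N -> in_ideal (e * a + s) (b ^+ e.+1 - b).
Proof.
move=> hb ba; elim: e => [|e IH]; first by rewrite expr1 subrr; apply: in_ideal0.
have -> : b ^+ e.+2 - b = b * (b ^+ e.+1 - b) + (b ^+ 2 - b).
  by rewrite exprS; move: (b ^+ e.+1) => x; ring.
apply: in_idealD; first by rewrite mulSn -addnA; apply: in_idealMl.
by apply: in_idealW hb; rewrite leq_addl.
Qed.

Lemma sos_proves_sub_of_quadratic s e (M a : R) h :
  0 < M -> 0 < a -> (pdeg h <= e)%N -> (2 * e <= s)%N ->
  sos_proves t s (M%:MP * h - a%:MP * h ^+ 2) -> sos_proves t s ((M / a)%:MP - h).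
Proof.
move=> M_gt0 a_gt0 he hs hquad.
(* M (M/a - h) = a (M/a - h)^2 + (M h - a h^2) *)
have aMa : a%:MP * (M / a)%:MP = M%:MP :> P by rewrite -mpolyCM mulrC divfK ?gt_eqF.
have MM : M^-1%:MP * M%:MP = 1 :> P by rewrite -mpolyCM mulVf ?gt_eqF.
have -> : (M / a)%:MP - h =
    M^-1%:MP * (a%:MP * ((M / a)%:MP - h) ^+ 2 + (M%:MP * h - a%:MP * h ^+ 2)).
  have -> : a%:MP * ((M / a)%:MP - h) ^+ 2 + (M%:MP * h - a%:MP * h ^+ 2) =
      ((M / a)%:MP - h) * (a%:MP * (M / a)%:MP) + h * (M%:MP - a%:MP * (M / a)%:MP) by ring.
  by rewrite aMa subrr mulr0 addr0 mulrCA MM mulr1.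
apply/sos_provesZ; first by rewrite invr_ge0 ltW.
apply: sos_provesD hquad; apply/sos_provesZ; first exact: ltW.
by apply: (sos_proves_sqr (a := e)) => //; apply: pdegB_le; rewrite ?pdegC.
Qed.

End Certificates.

Section MomentSystem.
Variable R : realType.
Variables n k d t : nat.
Variables i j : 'I_k.
Local Notation P := {mpoly R[Nv n k d]}.
Local Notation z r := (zvar R d r i j).
Local Notation v r l := (vvar R k r l).
Implicit Types (r s : 'I_n) (S : {set 'I_n}).

Definition sqnorm (r : 'I_n) : P := \sum_(l < d) v r l ^+ 2.
Definition vdot (s r : 'I_n) : P := \sum_(l < d) v s l * v r l.

Lemma pdeg_sqnorm r : (pdeg (sqnorm r) <= 2)%N.
Proof. by apply: pdeg_sum_le => l _; apply: (pdegX_le 2 (a := 1)); rewrite pdeg_vvar. Qed.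

Lemma pdeg_vdot s r : (pdeg (vdot s r) <= 2)%N.
Proof. by apply: pdeg_sum_le => l _; apply: (pdegM_le (a := 1) (b := 1)); rewrite pdeg_vvar. Qed.

Lemma in_ideal_zvar_idem r : in_ideal 2 (z r ^+ 2 - z r).
Proof.
rewrite -[_ - _]mul1r; apply: in_ideal_constr; first by left; exists r, i, j.
rewrite pdeg1 add0n; apply: pdegB_le; last by rewrite pdeg_zvar.
by apply: (pdegX_le 2 (a := 1)); rewrite pdeg_zvar.
Qed.

Lemma in_ideal_zz_vsub r s (W : 'I_d -> P) a : (forall l, pdeg (W l) <= a)%N ->
  in_ideal (a + 3) (z r * z s * \sum_(l < d) (v r l - v s l) * W l).
Proof.
move=> hW; rewrite mulr_sumr; apply: in_ideal_sum => l _.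
rewrite mulrA mulrC; apply: in_ideal_constr; first by right; right; exists i, j, r, s, l.
rewrite leq_add // (pdegM_le (a := 2) (b := 1)) ?(pdegM_le (a := 1) (b := 1)) ?pdegB_le //.
all: by rewrite ?pdeg_zvar ?pdeg_vvar.
Qed.

Lemma in_ideal_zz_powB r s A B (W : 'I_d -> P) e :
  (forall l, pdeg (W l) <= 1)%N -> (pdeg A <= 2)%N -> (pdeg B <= 2)%N ->
  A - B = \sum_(l < d) (v r l - v s l) * W l ->
  in_ideal (2 * e + 4) (z r * z s * (A ^+ e - B ^+ e)).
Proof.
move=> hW hA hB AB; rewrite subrXX AB mulr_suml.
under eq_bigr => l _ do rewrite -mulrA.
rewrite (_ : 2 * e + 4 = 2 * e + 1 + 3)%N; last by rewrite -addnA.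
apply: in_ideal_zz_vsub => l; rewrite addnC; apply: pdegM_le => //; apply: pdeg_sum_le => a _.
apply: leq_trans (pdegM_le (pdegX_le _ hA) (pdegX_le _ hB)) _.
by have := ltn_ord a; lia.
Qed.

Hypothesis t_even : ~~ odd t.
Local Notation m := (t %/ 2)%N.
Local Notation D := (4 * t.+1)%N.

Lemma half_addnn : (m + m)%N = t.
Proof. by rewrite addnn divn2 -[RHS]odd_double_half (negbTE t_even). Qed.

Definition moment_const : R := 2 * (4 * t%:R) ^+ m.
Local Notation K := moment_const.

Definition moment_bound (u : 'I_d -> P) : P :=
  K%:MP * (\sum_(l < d) u l ^+ 2) ^+ m
  - (n%:R^-1)%:MP * \sum_(s < n) (\sum_(l < d) v s l * u l) ^+ t.

Lemma ineq_constr_moment_bound u : (forall l, pdeg (u l) <= 2)%N -> ineq_constr t (moment_bound u).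
Proof. by move=> hu; exists u. Qed.

Lemma pdeg_moment_bound u : (forall l, pdeg (u l) <= 2)%N -> (pdeg (moment_bound u) <= 3 * t)%N.
Proof.
move=> hu; apply: pdegB_le; rewrite -[(3 * t)%N]add0n; apply: pdegM_le; rewrite ?pdegC //.
  apply: leq_trans (pdegX_le m (a := 4) _) _; last by rewrite -half_addnn; lia.
  by apply: pdeg_sum_le => l _; apply: (pdegX_le 2 (hu l)).
apply: pdeg_sum_le => s _; rewrite mulnC; apply: pdegX_le.
by apply: pdeg_sum_le => l _; apply: (pdegM_le (a := 1)); rewrite ?pdeg_vvar.
Qed.

Definition normt r : P := sqnorm r ^+ m.

Lemma normt_sqr r : normt r ^+ 2 = sqnorm r ^+ t.
Proof. by rewrite -exprM muln2 -addnn half_addnn. Qed.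

Lemma pdeg_normt r : (pdeg (normt r) <= t)%N.
Proof. by apply: leq_trans (pdegX_le m (pdeg_sqnorm r)) _; rewrite -{2}half_addnn; lia. Qed.

Lemma in_ideal_zvar_pow r e : in_ideal (e + 2) (z r ^+ e.+1 - z r).
Proof.
rewrite -[e in (e + 2)%N]muln1.
by apply: in_ideal_idemX (in_ideal_zvar_idem r) _; rewrite pdeg_zvar.
Qed.

Lemma sos_moment_bound_zvar r :
  sos_proves t D (K%:MP * (z r * normt r) - (n%:R^-1)%:MP * \sum_(s < n) z r * vdot s r ^+ t).
Proof.
pose u l := z r * v r l.
have hu l : (pdeg (u l) <= 2)%N.
  by apply: (pdegM_le (a := 1) (b := 1)); rewrite ?pdeg_zvar ?pdeg_vvar.
apply: (sos_proves_modideal (p := z r ^+ 2 * moment_bound u)).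
  apply: (sos_proves_sqr_mul_ineq (a := 1)) (ineq_constr_moment_bound hu) _ _.
    by rewrite pdeg_zvar.
  by have := pdeg_moment_bound hu; lia.
have sum_u2 : \sum_(l < d) u l ^+ 2 = z r ^+ 2 * sqnorm r.
  by rewrite mulr_sumr; apply: eq_bigr => l _; rewrite exprMn.
have dot_u s : \sum_(l < d) v s l * u l = z r * vdot s r.
  by rewrite mulr_sumr; apply: eq_bigr => l _; rewrite mulrCA.
have zpow : z r ^+ 2 * (z r ^+ 2 * sqnorm r) ^+ m = z r ^+ t.+2 * normt r.
  by rewrite exprMn mulrA -exprM -exprD mul2n -addnn half_addnn add2n.
have zdot s : z r ^+ 2 * (z r * vdot s r) ^+ t = z r ^+ t.+2 * vdot s r ^+ t.
  by rewrite exprMn mulrA -exprD add2n.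
set w := z r ^+ t.+2.
have -> : z r ^+ 2 * moment_bound u =
    K%:MP * (w * normt r) - (n%:R^-1)%:MP * \sum_(s < n) w * vdot s r ^+ t.
  rewrite /moment_bound sum_u2 mulrBr !(mulrCA (z r ^+ 2)) zpow mulr_sumr.
  by congr (_ - _ * _); apply: eq_bigr => s _; rewrite dot_u zdot.
have sum_w : \sum_(s < n) vdot s r ^+ t * (w - z r) =
    \sum_(s < n) w * vdot s r ^+ t - \sum_(s < n) z r * vdot s r ^+ t.
  by rewrite -sumrB; apply: eq_bigr => s _; ring.
have -> : K%:MP * (z r * normt r) - (n%:R^-1)%:MP * \sum_(s < n) z r * vdot s r ^+ t -
    (K%:MP * (w * normt r) - (n%:R^-1)%:MP * \sum_(s < n) w * vdot s r ^+ t) =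
    (n%:R^-1)%:MP * \sum_(s < n) vdot s r ^+ t * (w - z r) - K%:MP * (normt r * (w - z r)).
  by rewrite sum_w; ring.
rewrite -[D]add0n; apply: in_idealB; apply: in_idealMl; rewrite ?pdegC //.
  apply: in_ideal_sum => s _; apply: (in_idealW (s := (t * 2 + (t.+1 + 2))%N)); first lia.
  by apply: in_idealMl; [apply: pdegX_le; apply: pdeg_vdot | apply: in_ideal_zvar_pow].
apply: (in_idealW (s := (t + (t.+1 + 2))%N)); first lia.
by apply: in_idealMl; [apply: pdeg_normt | apply: in_ideal_zvar_pow].
Qed.

Lemma sos_zvar_idem_mul_sqr r (b h : P) :
  in_ideal 2 (b ^+ 2 - b) -> (pdeg b <= 1)%N -> (pdeg h <= t)%N ->
  sos_proves t D (z r * b * h ^+ 2).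
Proof.
move=> hb b1 ht.
have zb2 : (pdeg (z r * b) <= 2)%N by apply: (pdegM_le (a := 1)); rewrite ?pdeg_zvar.
apply: (sos_proves_idem_mul_sqr t (sb := 4) (a := 2) (e := t)) zb2 ht _ _; last 2 first.
- lia.
- lia.
apply: (in_ideal_idemM (a1 := 1) (a2 := 1)) (in_ideal_zvar_idem r) hb _ b1 _ _ => //.
by rewrite pdeg_zvar.
Qed.

Lemma sos_zvar_vdot_ge r s :
  sos_proves t D (z r * vdot s r ^+ t - z r * z s * normt r ^+ 2).
Proof.
have hmt : (pdeg (vdot s r ^+ m) <= t)%N.
  by apply: leq_trans (pdegX_le m (pdeg_vdot s r)) _; rewrite -{2}half_addnn; lia.
have -> : z r * vdot s r ^+ t - z r * z s * normt r ^+ 2 =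
    z r * (1 - z s) * (vdot s r ^+ m) ^+ 2 + z s * z r * (vdot s r ^+ t - sqnorm r ^+ t).
  by rewrite normt_sqr -exprM muln2 -addnn half_addnn; ring.
apply: sos_provesD.
  apply: sos_zvar_idem_mul_sqr hmt; first exact/in_ideal_idem1B/in_ideal_zvar_idem.
  by apply: pdegB_le; rewrite ?pdeg1 ?pdeg_zvar.
apply/sos_proves_ideal/(in_idealW (s := (2 * t + 4)%N)); first lia.
apply: (in_ideal_zz_powB (W := fun l => v r l)) => [l|||];
  rewrite ?pdeg_vvar ?pdeg_vdot ?pdeg_sqnorm //.
by rewrite /vdot /sqnorm -sumrB; apply: eq_bigr => l _; ring.
Qed.

Lemma sos_zz_normt_sqr r s : sos_proves t D (z r * z s * normt r ^+ 2).
Proof.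
by apply: sos_zvar_idem_mul_sqr (in_ideal_zvar_idem s) _ (pdeg_normt r); rewrite pdeg_zvar.
Qed.

Lemma sos_moment_bound_zz r :
  sos_proves t D (K%:MP * (z r * normt r) - (n%:R^-1)%:MP * \sum_(s < n) z r * z s * normt r ^+ 2).
Proof.
have -> : K%:MP * (z r * normt r) - (n%:R^-1)%:MP * \sum_(s < n) z r * z s * normt r ^+ 2 =
    (K%:MP * (z r * normt r) - (n%:R^-1)%:MP * \sum_(s < n) z r * vdot s r ^+ t) +
    (n%:R^-1)%:MP * \sum_(s < n) (z r * vdot s r ^+ t - z r * z s * normt r ^+ 2).
  by rewrite sumrB; ring.
apply: sos_provesD (sos_moment_bound_zvar r) _.
apply: sos_provesZ; first by rewrite invr_ge0 ler0n.
by apply: sos_proves_sum => s _; apply: sos_zvar_vdot_ge.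
Qed.

Definition weighted_moment (S : {set 'I_n}) : P := \sum_(r in S) z r * normt r.

Lemma in_ideal_weighted_moment_sqr S :
  in_ideal D (\sum_(r in S) \sum_(s in S) z r * z s * normt r ^+ 2 - weighted_moment S ^+ 2).
Proof.
rewrite /weighted_moment expr2 mulr_suml -sumrB; apply: in_ideal_sum => r _.
rewrite mulr_sumr -sumrB; apply: in_ideal_sum => s _.
have -> : z r * z s * normt r ^+ 2 - z r * normt r * (z s * normt s) =
    normt r * (z r * z s * (sqnorm r ^+ m - sqnorm s ^+ m)) by rewrite /normt; ring.
apply: (in_idealW (s := (t + (2 * m + 4))%N)); first lia.
apply: in_idealMl (pdeg_normt r) _.
apply: (in_ideal_zz_powB (W := fun l => v r l + v s l)) => [l|||]; rewrite ?pdeg_sqnorm //.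
  by apply: pdegD_le; rewrite pdeg_vvar.
by rewrite /sqnorm -sumrB; apply: eq_bigr => l _; ring.
Qed.

Lemma sos_weighted_moment_quadratic S :
  sos_proves t D (K%:MP * weighted_moment S - (n%:R^-1)%:MP * weighted_moment S ^+ 2).
Proof.
pose F r s := z r * z s * normt r ^+ 2.
have split_S : \sum_(r in S) \sum_(s < n) F r s =
    \sum_(r in S) \sum_(s in S) F r s + \sum_(r in S) \sum_(s | s \notin S) F r s.
  by rewrite -big_split; apply: eq_bigr => r _; rewrite (bigID (mem S)).
have -> : K%:MP * weighted_moment S - (n%:R^-1)%:MP * weighted_moment S ^+ 2 =
    \sum_(r in S) (K%:MP * (z r * normt r) - (n%:R^-1)%:MP * \sum_(s < n) F r s) +
    (n%:R^-1)%:MP * \sum_(r in S) \sum_(s | s \notin S) F r s +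
    (n%:R^-1)%:MP * (\sum_(r in S) \sum_(s in S) F r s - weighted_moment S ^+ 2).
  by rewrite sumrB -!mulr_sumr split_S /weighted_moment; ring.
have n_inv_ge0 : 0 <= n%:R^-1 :> R by rewrite invr_ge0 ler0n.
apply: sos_provesD; last exact/sos_provesZ/sos_proves_ideal/in_ideal_weighted_moment_sqr.
apply: sos_provesD; first by apply: sos_proves_sum => r _; apply: sos_moment_bound_zz.
apply: sos_provesZ => //; apply: sos_proves_sum => r _; apply: sos_proves_sum => s _.
exact: sos_zz_normt_sqr.
Qed.

Lemma moment_const_gt0 : 0 < K.
Proof.
rewrite /moment_const mulr_gt0 //; case: t => [|t']; first by rewrite div0n expr0.
by rewrite exprn_gt0 // mulr_gt0 // ltr0n.
Qed.

Lemma sos_weighted_moment_le S : sos_proves t D ((n%:R * K)%:MP - weighted_moment S).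
Proof.
have [n0|n_gt0] := posnP n.
  have -> : weighted_moment S = 0.
    by rewrite /weighted_moment big1 // => -[r rn] _; exfalso; move: rn; rewrite n0.
  by rewrite subr0; apply: sos_proves_const; rewrite n0 mul0r.
rewrite -[n%:R]invrK mulrC.
apply: (sos_proves_sub_of_quadratic (e := t.+1)) (sos_weighted_moment_quadratic S).
- exact: moment_const_gt0.
- by rewrite invr_gt0 ltr0n.
- apply: pdeg_sum_le => r _; apply: (pdegM_le (a := 1)); rewrite ?pdeg_zvar ?pdeg_normt //.
- lia.
Qed.

Lemma sos_weighted_moment_avg_le S c : (n <= #|S| * k ^ c)%N ->
  sos_proves t D ((2 * k%:R ^+ c * (4 * t%:R) ^+ m)%:MP -
                  (#|S|%:R^-1)%:MP * weighted_moment S).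
Proof.
move=> hS.
have avg : n%:R / #|S|%:R <= k%:R ^+ c :> R.
  have [->|S_gt0] := posnP #|S|; first by rewrite invr0 mulr0 exprn_ge0.
  by rewrite ler_pdivrMr ?ltr0n // -natrX -natrM ler_nat mulnC.
have -> : 2 * k%:R ^+ c * (4 * t%:R) ^+ m =
    K * (k%:R ^+ c - n%:R / #|S|%:R) + #|S|%:R^-1 * (n%:R * K).
  by rewrite /moment_const; ring.
rewrite mpolyCD [(_ * (_ * K))%:MP]mpolyCM -addrA -mulrBr.
apply: sos_provesD.
  by apply: sos_proves_const; rewrite mulr_ge0 ?subr_ge0 // ltW // moment_const_gt0.
by apply: sos_provesZ (sos_weighted_moment_le S); rewrite invr_ge0 ler0n.
Qed.

End MomentSystem.

Theorem lemma5p3 :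
  exists C : nat, forall (R : realType) (n k d t c : nat) (S : {set 'I_n}),
    ~~ odd t ->
    (n <= #|S| * k ^ c)%N ->
    forall i j : 'I_k,
      sos_proves t (C * t.+1)
        ((2 * (k%:R) ^+ c * (4 * t%:R) ^+ (t %/ 2) : R)%:MP
         - ((#|S|%:R)^-1 : R)%:MP * \sum_(r in S)
             zvar R d r i j * (\sum_(l < d) vvar R k r l ^+ 2) ^+ (t %/ 2)
           : {mpoly R[Nv n k d]}).
Proof.
exists 4%N => R n k d t c S t_even hS i j.
exact: (sos_weighted_moment_avg_le R d i j t_even hS).
Qed.
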